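(* Let $S$ be a subcartesian space. Then the function $N\colon S\to\mathbb{N}$, $x\mapsto n_x$, is upper semi-continuous, i.e. for every $a\in\mathbb{R}$ the set $\{x\in S\colon n_x<a\}$ is open in $S$.
   Context: A differential space (Sikorski) is a set $S$ with a family $C^\infty(S)$ of real functions, $S$ carrying the weakest topology making them continuous, closed under composition with smooth functions on $\mathbb{R}^k$, and such that functions locally agreeing with elements of $C^\infty(S)$ belong to $C^\infty(S)$; subsets inherit differential-space structures (for $V\subseteq\mathbb{R}^n$, smooth functions are those locally agreeing with restrictions of smooth functions on $\mathbb{R}^n$). Diffeomorphisms are smooth bijections with smooth inverses. A subcartesian space is a Hausdorff differential space each point of which has an open neighbourhood diffeomorphic to a differential subspace of some $\mathbb{R}^n$. The structural dimension $n_x$ of $S$ at $x$ is the smallest integer $n$ such that some open neighbourhood of $x$ in $S$ is diffeomorphic to a subset of $\mathbb{R}^n$. *)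

From HB Require Import structures.
From mathcomp Require Import all_boot all_order all_algebra.
From mathcomp Require Import all_classical all_reals all_analysis.
Set Implicit Arguments. Unset Strict Implicit. Unset Printing Implicit Defensive.
Import Order.TTheory GRing.Theory Num.Theory.
Import numFieldNormedType.Exports.
Local Open Scope classical_set_scope.
Local Open Scope ring_scope.

Section DiffSpaces.
Variable R : realType.

Fixpoint Ck (k : nat) (n : nat) (f : 'rV[R]_n -> R) : Prop :=
  match k with
  | 0 => continuous f
  | k'.+1 => (forall x, differentiable f x) /\ forall v : 'rV[R]_n, Ck k' ('D_v f)
  end.

Definition smoothRn (n : nat) (f : 'rV[R]_n -> R) : Prop := forall k, Ck k f.

(** The weakest topology on S making every f in C continuous: U is open iff
    every point of U has a basic neighbourhood given by finitely many f's. *)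
Definition ds_open (S : Type) (C : set (S -> R)) (U : set S) : Prop :=
  forall x, U x -> exists (k : nat) (fs : 'I_k -> S -> R) (e : R),
    (forall i, C (fs i)) /\ 0 < e /\
    (forall y, (forall i, `|fs i y - fs i x| < e) -> U y).

Definition diff_space (S : Type) (C : set (S -> R)) : Prop :=
  (forall (k : nat) (F : 'rV[R]_k -> R) (fs : 'I_k -> S -> R),
      smoothRn F -> (forall i, C (fs i)) -> C (fun x => F (\row_i fs i x))) /\
  (forall g : S -> R,
      (forall x, exists U f, ds_open C U /\ U x /\ C f /\ forall y, U y -> g y = f y) ->
      C g).

Definition sub_C (S : Type) (C : set (S -> R)) (A : set S)
    : set ({x : S | A x} -> R) :=
  fun h => forall x : {x : S | A x}, exists U f, ds_open C U /\ U (proj1_sig x) /\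
    C f /\ forall y : {x : S | A x}, U (proj1_sig y) -> h y = f (proj1_sig y).

Arguments sub_C {S} C A _.

Definition smooth_map (S T : Type) (C : set (S -> R)) (D : set (T -> R))
    (phi : S -> T) : Prop := forall f, D f -> C (f \o phi).

Definition diffeomorphic (S T : Type) (C : set (S -> R)) (D : set (T -> R))
    : Prop :=
  exists (phi : S -> T) (psi : T -> S),
    cancel phi psi /\ cancel psi phi /\ smooth_map C D phi /\ smooth_map D C psi.

Definition w_hausdorff (S : Type) (C : set (S -> R)) : Prop :=
  forall x y : S, x <> y -> exists U V, ds_open C U /\ ds_open C V /\ U x /\ V y /\
    U `&` V = set0.

Definition subcartesian (S : Type) (C : set (S -> R)) : Prop :=
  diff_space C /\ w_hausdorff C /\
  forall x : S, exists U, ds_open C U /\ U x /\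
    exists (n : nat) (V : set 'rV[R]_n),
      diffeomorphic (sub_C C U) (sub_C (@smoothRn n) V).

Definition dim_le (S : Type) (C : set (S -> R)) (x : S) (n : nat) : Prop :=
  exists U, ds_open C U /\ U x /\
    exists V : set 'rV[R]_n, diffeomorphic (sub_C C U) (sub_C (@smoothRn n) V).

Definition struct_dim (S : Type) (C : set (S -> R)) (x : S) (n : nat) : Prop :=
  dim_le C x n /\ forall m, dim_le C x m -> (n <= m)%N.

End DiffSpaces.

From HB Require Import structures.
From mathcomp Require Import all_boot all_order all_algebra.
From mathcomp Require Import all_classical all_reals all_analysis.
Set Implicit Arguments.
Unset Strict Implicit.
Unset Printing Implicit Defensive.
Import Order.TTheory GRing.Theory Num.Theory.
Local Open Scope classical_set_scope.
Local Open Scope ring_scope.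

(* A neighbourhood U of x diffeomorphic to a subset of R^n is also a
   neighbourhood of every y in U, so n_y <= n_x on U. *)

Section StructuralDimension.
Context {R : realType} {S : Type} {C : set (S -> R)}.

Lemma ds_openP (A : set S) :
  (forall x, A x -> exists U, ds_open C U /\ U x /\ U `<=` A) -> ds_open C A.
Proof.
move=> nbhsA x Ax; have [U [oU [Ux UA]]] := nbhsA x Ax.
have [k [fs [e [Cfs [e_gt0 ballU]]]]] := oU x Ux.
by exists k, fs, e; split=> //; split=> // y /ballU /UA.
Qed.

Lemma dim_le_nbhs (x : S) (n : nat) :
  dim_le C x n -> exists U, ds_open C U /\ U x /\ forall y, U y -> dim_le C y n.
Proof.
move=> [U [oU [Ux UV]]]; exists U; split=> //; split=> // y Uy.
by exists U.
Qed.

Lemma dim_le_struct_dim (x : S) (n : nat) :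
  dim_le C x n -> exists m, struct_dim C x m /\ (m <= n)%N.
Proof.
move=> dimn.
have ex_dim : exists m, `[< dim_le C x m >] by exists n; apply/asboolP.
case: (ex_minnP ex_dim) => m /asboolP dimm m_min.
exists m; split; last exact/m_min/asboolP.
by split=> // k dimk; apply/m_min/asboolP.
Qed.

End StructuralDimension.

Theorem mainTheorem4 (R : realType) (S : Type) (C : set (S -> R))
  (HS : subcartesian C) (a : R) :
  ds_open C [set x | exists n : nat, struct_dim C x n /\ (n%:R : R) < a].
Proof.
apply: ds_openP => x [n [[dimn _] na]].
have [U [oU [Ux dimU]]] := dim_le_nbhs dimn.
exists U; split=> //; split=> // y Uy.
have [m [dimm mn]] := dim_le_struct_dim (dimU y Uy).
by exists m; split=> //; apply: le_lt_trans na; rewrite ler_nat.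
Qed.
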